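(* Let $R$ be a pro-ring (object of $\operatorname{Pro}(\mathbf{Rng})$), let $K$ be a unital commutative ring (viewed as a constant pro-set), and suppose the unital commutative ring object $K$ acts on the ring object $R$ in $\operatorname{Pro}(\mathbf{Set})$, i.e. there is a morphism $K\times R\to R$, $(k,a)\mapsto ka$, in $\operatorname{Pro}(\mathbf{Set})$ which is biadditive and satisfies $(kk')a=k(k'a)$, $1a=a$, $k(ab)=(ka)b=a(kb)$ as equalities of morphisms in $\operatorname{Pro}(\mathbf{Set})$. Then $R$ is isomorphic in $\operatorname{Pro}(\mathbf{Rng})$ to a pro-$K$-algebra, i.e. a formal projective limit of an inverse system of (non-unital) $K$-algebras with $K$-linear transition maps, compatibly with the given action.
   Context: For a category $\mathcal C$, $\operatorname{Pro}(\mathcal C)$ is its pro-completion: objects are inverse systems, i.e. functors $X\colon \mathcal I_X^{op}\to\mathcal C$ with $\mathcal I_X$ a small filtered category, and $\operatorname{Hom}_{\operatorname{Pro}(\mathcal C)}(X,Y)=\varprojlim_{j\in\mathcal I_Y}\varinjlim_{i\in\mathcal I_X}\mathcal C(X_i,Y_j)$. $\mathbf{Rng}$ denotes non-unital associative rings; the canonical functor $\operatorname{Pro}(\mathbf{Rng})\to\mathrm{Rng}(\operatorname{Pro}(\mathbf{Set}))$ uses levelwise operations. *)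

(* A morphism is represented by a family of representatives (i(j), f_j : X_{i(j)} -> Y_j)
   compatible in the colimits; equality of morphisms is equality of the germs. *)
From HB Require Import structures.
From mathcomp Require Import all_boot all_algebra.
From Stdlib Require Import ClassicalEpsilon.
Set Implicit Arguments. Unset Strict Implicit. Unset Printing Implicit Defensive.
Import GRing.Theory.
Local Open Scope ring_scope.

Record FiltCat := {
  fc_ob :> Type;
  fc_hom : fc_ob -> fc_ob -> Type;
  fc_id : forall i, fc_hom i i;
  fc_comp : forall i j k, fc_hom j k -> fc_hom i j -> fc_hom i k;
  fc_compA : forall i j k l (f : fc_hom i j) (g : fc_hom j k) (h : fc_hom k l),
      fc_comp h (fc_comp g f) = fc_comp (fc_comp h g) f;
  fc_id_l : forall i j (f : fc_hom i j), fc_comp (fc_id j) f = f;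
  fc_id_r : forall i j (f : fc_hom i j), fc_comp f (fc_id i) = f;
  fc_nonempty : inhabited fc_ob;
  fc_cone : forall i j, inhabited {k : fc_ob & (fc_hom i k * fc_hom j k)%type};
  fc_coeq : forall i j (u v : fc_hom i j),
      exists k (w : fc_hom j k), fc_comp w u = fc_comp w v
}.

Record fam (I : FiltCat) := Fam {
  fX : I -> Type;
  fmap : forall i j, fc_hom i j -> fX j -> fX i }.
Arguments fX {I} f _.
Arguments fmap {I} f {i j} _ _.


Definition isFunctorFam (I : FiltCat) (F : fam I) : Prop :=
  (forall i x, fmap F (fc_id i) x = x) /\
  (forall i j k (u : fc_hom i j) (v : fc_hom j k) x,
      fmap F (fc_comp v u) x = fmap F u (fmap F v x)).

Record sys := Sys { sI : FiltCat; sF : fam sI }.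
Arguments Sys {sI} sF.
Definition sX {S : sys} (i : sI S) : Type := fX (sF S) i.
Definition smap (S : sys) (i j : sI S) (u : fc_hom i j) : sX j -> sX i :=
  fmap (sF S) u.
Arguments smap {S i j} u x.

Record proMap (X Y : sys) := ProMap {
  pm_idx : sI Y -> sI X;
  pm_fun : forall j, sX (pm_idx j) -> sX j }.
Arguments pm_idx {X Y} p j.
Arguments pm_fun {X Y} p j x.
Arguments ProMap : clear implicits.

(* equality of two elements (i,f), (i',f') of colim_i Set(X_i, T) *)
Definition germ_eq (X : sys) (T : Type) (i i' : sI X)
  (f : sX i -> T) (f' : sX i' -> T) : Prop :=
  exists k (u : fc_hom i k) (u' : fc_hom i' k),
    forall x : sX k, f (smap u x) = f' (smap u' x).

(* the family defines an element of lim_j colim_i Set(X_i, Y_j) *)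
Definition isProMor (X Y : sys) (f : proMap X Y) : Prop :=
  forall (j j' : sI Y) (v : fc_hom j j'),
    germ_eq (fun x => smap v (pm_fun f j' x)) (pm_fun f j).

Definition pro_eq (X Y : sys) (f g : proMap X Y) : Prop :=
  forall j : sI Y, germ_eq (pm_fun f j) (pm_fun g j).

Definition procomp (X Y Z : sys) (g : proMap Y Z) (f : proMap X Y) : proMap X Z :=
  ProMap X Z (fun k => pm_idx f (pm_idx g k))
             (fun k x => pm_fun g k (pm_fun f (pm_idx g k) x)).

Definition pid (X : sys) : proMap X X := ProMap X X (fun j => j) (fun j x => x).

Definition lw (I : FiltCat) (F G : fam I) (f : forall i, fX F i -> fX G i)
  : proMap (@Sys I F) (@Sys I G) :=
  ProMap (@Sys I F) (@Sys I G) (fun j => j) f.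

Definition famConst (I : FiltCat) (T : Type) : fam I :=
  @Fam I (fun _ => T) (fun _ _ _ x => x).
Definition famProd (I : FiltCat) (F G : fam I) : fam I :=
  @Fam I (fun i => (fX F i * fX G i)%type)
         (fun i j u x => (fmap F u x.1, fmap G u x.2)).

Definition pick (A : Type) (H : inhabited A) : A := epsilon H (fun _ => True).
Definition cone_pt (I : FiltCat) (i j : I) : {k : I & (fc_hom i k * fc_hom j k)%type} :=
  pick (fc_cone i j).

(* pairing <f,g> : Z -> F x G (the product of two systems over the same
   filtered index category is computed levelwise) *)
Definition ppair (Z : sys) (I : FiltCat) (F G : fam I)
  (f : proMap Z (@Sys I F)) (g : proMap Z (@Sys I G))
  : proMap Z (@Sys I (famProd F G)) :=
  ProMap Z (@Sys I (famProd F G))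
    (fun j => projT1 (cone_pt (pm_idx f j) (pm_idx g j)))
    (fun j (z : sX (projT1 (cone_pt (pm_idx f j) (pm_idx g j)))) =>
       (pm_fun f j (smap (fst (projT2 (cone_pt (pm_idx f j) (pm_idx g j)))) z),
        pm_fun g j (smap (snd (projT2 (cone_pt (pm_idx f j) (pm_idx g j)))) z))).

Definition prodK (T : Type) (I J : FiltCat) (F : fam I) (G : fam J)
  (f : proMap (@Sys I F) (@Sys J G))
  : proMap (@Sys I (famProd (famConst I T) F)) (@Sys J (famProd (famConst J T) G)) :=
  ProMap (@Sys I (famProd (famConst I T) F)) (@Sys J (famProd (famConst J T) G))
    (pm_idx f) (fun j x => (x.1, pm_fun f j x.2)).

Record rng := Rng {
  rcar :> zmodType;
  rmul : rcar -> rcar -> rcar;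
  rmulA : associative rmul;
  rmulDl : left_distributive rmul +%R;
  rmulDr : right_distributive rmul +%R }.

Record rhomP (A B : rng) (f : A -> B) : Prop := RHomP {
  rh_add : forall x y, f (x + y) = f x + f y;
  rh_mul : forall x y, f (rmul x y) = rmul (f x) (f y) }.

Record rhom (A B : rng) := RHom { rh_fun :> A -> B; rh_prop : rhomP rh_fun }.

Record kalg (K : comPzRingType) := KAlg {
  ka_rng :> rng;
  kscale : K -> ka_rng -> ka_rng;
  kscaleDl : forall k k' a, kscale (k + k') a = kscale k a + kscale k' a;
  kscaleDr : forall k a b, kscale k (a + b) = kscale k a + kscale k b;
  kscaleA : forall k k' a, kscale (k * k') a = kscale k (kscale k' a);
  kscale1 : forall a, kscale 1 a = a;
  kscale_mull : forall k a b, kscale k (rmul a b) = rmul (kscale k a) b;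
  kscale_mulr : forall k a b, kscale k (rmul a b) = rmul a (kscale k b) }.

Record proRng := ProRng {
  prI : FiltCat;
  prR : prI -> rng;
  prmap : forall i j, fc_hom i j -> rhom (prR j) (prR i);
  prmap_id : forall i x, prmap (fc_id i) x = x;
  prmap_comp : forall i j k (u : fc_hom i j) (v : fc_hom j k) x,
      prmap (fc_comp v u) x = prmap u (prmap v x) }.
Arguments prR : clear implicits.
Arguments prmap p {i j} _.

Definition rfam (R : proRng) : fam (prI R) :=
  @Fam (prI R) (fun i => (prR R i : Type)) (fun i j u x => prmap R u x).
Definition rsys (R : proRng) : sys := @Sys (prI R) (rfam R).

Definition isRngMor (R S : proRng) (f : proMap (rsys R) (rsys S)) : Prop :=
  isProMor f /\
  forall j, @rhomP (prR R (pm_idx f j)) (prR S j) (pm_fun f j).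

Record proKAlg (K : comPzRingType) := ProKAlg {
  paI : FiltCat;
  paA : paI -> kalg K;
  pamap : forall i j, fc_hom i j -> rhom (paA j) (paA i);
  pamap_lin : forall i j (u : fc_hom i j) k x,
      pamap u (kscale k x) = kscale k (pamap u x);
  pamap_id : forall i x, pamap (fc_id i) x = x;
  pamap_comp : forall i j k (u : fc_hom i j) (v : fc_hom j k) x,
      pamap (fc_comp v u) x = pamap u (pamap v x) }.
Arguments paA {K} p _.
Arguments pamap {K} p {i j} _.

Definition pa_rng (K : comPzRingType) (A : proKAlg K) : proRng :=
  @ProRng (paI A) (fun i => ka_rng (paA A i)) (fun i j u => pamap A u)
          (@pamap_id K A) (@pamap_comp K A).

Section Objects.
Variables (K : comPzRingType) (R : proRng).
Let I := prI R.
Definition fKR : fam I := famProd (famConst I K) (rfam R).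
Definition fKKR : fam I := famProd (famConst I K) fKR.
Definition fRR : fam I := famProd (rfam R) (rfam R).
Definition fKRR : fam I := famProd (famConst I K) fRR.

Definition addR : proMap (Sys fRR) (rsys R) :=
  @lw I fRR (rfam R) (fun i (x : (prR R i * prR R i)%type) => (x.1 + x.2 : prR R i)).
Definition mulR : proMap (Sys fRR) (rsys R) :=
  @lw I fRR (rfam R) (fun i (x : (prR R i * prR R i)%type) => (rmul x.1 x.2 : prR R i)).
Definition addK_id : proMap (Sys fKKR) (Sys fKR) :=
  @lw I fKKR fKR (fun i (x : (K * (K * prR R i))%type) => (x.1 + x.2.1, x.2.2)).
Definition mulK_id : proMap (Sys fKKR) (Sys fKR) :=
  @lw I fKKR fKR (fun i (x : (K * (K * prR R i))%type) => (x.1 * x.2.1, x.2.2)).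
Definition pKKR_13 : proMap (Sys fKKR) (Sys fKR) :=
  @lw I fKKR fKR (fun i (x : (K * (K * prR R i))%type) => (x.1, x.2.2)).
Definition pKKR_23 : proMap (Sys fKKR) (Sys fKR) :=
  @lw I fKKR fKR (fun i (x : (K * (K * prR R i))%type) => x.2).
Definition pKRR_12 : proMap (Sys fKRR) (Sys fKR) :=
  @lw I fKRR fKR (fun i (x : (K * (prR R i * prR R i))%type) => (x.1, x.2.1)).
Definition pKRR_13 : proMap (Sys fKRR) (Sys fKR) :=
  @lw I fKRR fKR (fun i (x : (K * (prR R i * prR R i))%type) => (x.1, x.2.2)).
Definition pKRR_2 : proMap (Sys fKRR) (rsys R) :=
  @lw I fKRR (rfam R) (fun i (x : (K * (prR R i * prR R i))%type) => x.2.1).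
Definition pKRR_3 : proMap (Sys fKRR) (rsys R) :=
  @lw I fKRR (rfam R) (fun i (x : (K * (prR R i * prR R i))%type) => x.2.2).
Definition one_id : proMap (rsys R) (Sys fKR) :=
  @lw I (rfam R) fKR (fun i (a : prR R i) => ((1 : K), a)).
End Objects.

Definition isAction (K : comPzRingType) (R : proRng)
  (act : proMap (Sys (fKR K R)) (rsys R)) : Prop :=
  isProMor act /\
    pro_eq (procomp act (addK_id K R))
           (procomp (addR R) (ppair (procomp act (pKKR_13 K R)) (procomp act (pKKR_23 K R)))) /\
    pro_eq (procomp act (prodK K (addR R)))
           (procomp (addR R) (ppair (procomp act (pKRR_12 K R)) (procomp act (pKRR_13 K R)))) /\
    pro_eq (procomp act (mulK_id K R)) (procomp act (prodK K act)) /\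
    pro_eq (procomp act (one_id K R)) (pid (rsys R)) /\
    pro_eq (procomp act (prodK K (mulR R)))
           (procomp (mulR R) (ppair (procomp act (pKRR_12 K R)) (pKRR_3 K R))) /\
    pro_eq (procomp act (prodK K (mulR R)))
           (procomp (mulR R) (ppair (pKRR_2 K R) (procomp act (pKRR_13 K R)))).

Definition actA (K : comPzRingType) (A : proKAlg K)
  : proMap (Sys (fKR K (pa_rng A))) (rsys (pa_rng A)) :=
  @lw (paI A) (fKR K (pa_rng A)) (rfam (pa_rng A))
      (fun i (x : (K * paA A i)%type) => (kscale x.1 x.2 : prR (pa_rng A) i)).

From HB Require Import structures.
From mathcomp Require Import all_boot all_algebra.
From mathcomp Require Import boolp.
Set Implicit Arguments. Unset Strict Implicit. Unset Printing Implicit Defensive.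
Import GRing.Theory.
Local Open Scope ring_scope.

(* Fix a level [j] of [R] and a representative [r |-> c r : R_i -> R_j] of the
   action, reached through a transition [t : src j -> i].  Refining [t] along
   the pro-system makes it admissible: additive in [c] and in [r],
   multiplicative, [(c r)(d s) = (c d)(r s)], and unital, [1 r] being a
   transition map.  Admissible cuts form a filtered category of stages, cofinal
   in the levels of [R].  At a stage, the functions [k |-> k x], [x] a formal
   sum of terms [c r], form a K-algebra under [(c g)(k) = g (k c)] and
   [(g h)(k) = g k * h 1]; [r |-> (k |-> k r)] and [g |-> g 1] are mutually
   inverse isomorphisms of pro-rings compatible with the action. *)

Lemma fc_span (I : FiltCat) (a c1 c2 : I) (f1 : fc_hom a c1) (f2 : fc_hom a c2) :
  exists d (g1 : fc_hom c1 d) (g2 : fc_hom c2 d), fc_comp g1 f1 = fc_comp g2 f2.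
Proof.
case: (fc_cone c1 c2) => [[k [p1 p2]]].
case: (fc_coeq (fc_comp p1 f1) (fc_comp p2 f2)) => k' [w Hw].
by exists k', (fc_comp w p1), (fc_comp w p2); rewrite -!fc_compA.
Qed.

Lemma additive0 (A B : zmodType) (f : A -> B) :
  (forall x y, f (x + y) = f x + f y) -> f 0 = 0.
Proof. by move=> fD; apply: (addrI (f 0)); rewrite -fD !addr0. Qed.

Lemma additive_sum (A B : zmodType) (T : Type) (f : A -> B) (s : seq T) (F : T -> A) :
  (forall x y, f (x + y) = f x + f y) ->
  f (\sum_(x <- s) F x) = \sum_(x <- s) f (F x).
Proof.
move=> fD; elim: s => [|x s IHs]; first by rewrite !big_nil additive0.
by rewrite !big_cons fD IHs.
Qed.

Lemma rmul_suml (A : rng) (T : Type) (s : seq T) (F : T -> A) (b : A) :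
  rmul (\sum_(x <- s) F x) b = \sum_(x <- s) rmul (F x) b.
Proof. exact: (@additive_sum A A T (fun x => rmul x b) s F (fun x y => rmulDl x y b)). Qed.

Lemma rmul_sumr (A : rng) (T : Type) (s : seq T) (F : T -> A) (b : A) :
  rmul b (\sum_(x <- s) F x) = \sum_(x <- s) rmul b (F x).
Proof. exact: (@additive_sum A A T (fun x => rmul b x) s F (rmulDr b)). Qed.

Section ScalarAction.
Variables (K : comPzRingType) (R : proRng) (act : proMap (Sys (fKR K R)) (rsys R)).
Hypothesis act_action : isAction act.

Notation I := (prI R).
Notation hom := (@fc_hom (prI R)).

Definition tr (i j : I) (u : hom i j) (x : prR R j) : prR R i := prmap R u x.
Definition src (j : I) : I := pm_idx act j.
Definition scal (j : I) (c : K) (x : prR R (src j)) : prR R j := pm_fun act j (c, x).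
Arguments scal : clear implicits.

Lemma tr_id i x : tr (fc_id i) x = x.
Proof. exact: prmap_id. Qed.

Lemma tr_comp i j k (u : hom i j) (v : hom j k) x : tr (fc_comp v u) x = tr u (tr v x).
Proof. exact: prmap_comp. Qed.

Lemma trD i j (u : hom i j) x y : tr u (x + y) = tr u x + tr u y.
Proof. exact: (rh_add (rh_prop (prmap R u))). Qed.

Lemma trM i j (u : hom i j) x y : tr u (rmul x y) = rmul (tr u x) (tr u y).
Proof. exact: (rh_mul (rh_prop (prmap R u))). Qed.

Lemma tr_sum i j (u : hom i j) T (s : seq T) F :
  tr u (\sum_(x <- s) F x) = \sum_(x <- s) tr u (F x).
Proof. exact: (@additive_sum (prR R j) (prR R i) T (@tr i j u) s F (trD u)). Qed.

Lemma tr_coeq a b (u v : hom a b) :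
  exists c (z : hom b c), forall y, tr u (tr z y) = tr v (tr z y).
Proof.
case: (fc_coeq u v) => c [z zuv]; exists c, z => y.
by rewrite -!tr_comp zuv.
Qed.

Lemma tr_span a c1 c2 (f1 : hom a c1) (f2 : hom a c2) :
  exists d (g1 : hom c1 d) (g2 : hom c2 d), forall y, tr f1 (tr g1 y) = tr f2 (tr g2 y).
Proof.
case: (fc_span f1 f2) => d [g1 [g2 g12]]; exists d, g1, g2 => y.
by rewrite -!tr_comp g12.
Qed.

Definition scal_via j i (t : hom (src j) i) (c : K) (r : prR R i) : prR R j :=
  scal j c (tr t r).

Definition via_addr j i (t : hom (src j) i) :=
  forall c r s, scal_via t c (r + s) = scal_via t c r + scal_via t c s.
Definition via_addl j i (t : hom (src j) i) :=
  forall c d r, scal_via t (c + d) r = scal_via t c r + scal_via t d r.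
Definition via_mul j i (t : hom (src j) i) :=
  forall c d r s, rmul (scal_via t c r) (scal_via t d s) = scal_via t (c * d) (rmul r s).
Definition via_unit j i (t : hom (src j) i) :=
  exists tau : hom j i, forall x, scal_via t 1 x = tr tau x.
Definition admissible j i (t : hom (src j) i) :=
  [/\ via_addr t, via_addl t, via_mul t & via_unit t].

Definition upward j (P : forall i, hom (src j) i -> Prop) :=
  forall i (t : hom (src j) i) i' (w : hom i i'), P i t -> P i' (fc_comp w t).
Definition eventually j (P : forall i, hom (src j) i -> Prop) :=
  exists i (t : hom (src j) i), P i t.

Lemma eventually_and j (P Q : forall i, hom (src j) i -> Prop) :
  upward P -> upward Q -> eventually P -> eventually Q ->
  eventually (fun i t => P i t /\ Q i t).
Proof.
move=> upP upQ [i1 [t1 Pt1]] [i2 [t2 Qt2]].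
case: (fc_span t1 t2) => d [g1 [g2 g12]].
exists d, (fc_comp g1 t1); split; first exact: upP.
by rewrite g12; apply: upQ.
Qed.

Lemma scal_via_comp j i i' (t : hom (src j) i) (w : hom i i') c r :
  scal_via (fc_comp w t) c r = scal_via t c (tr w r).
Proof. by rewrite /scal_via tr_comp. Qed.

Lemma upward_via_addr j : upward (@via_addr j).
Proof. by move=> i t i' w tD c r s; rewrite !scal_via_comp trD tD. Qed.

Lemma upward_via_addl j : upward (@via_addl j).
Proof. by move=> i t i' w tD c d r; rewrite !scal_via_comp tD. Qed.

Lemma upward_via_mul j : upward (@via_mul j).
Proof. by move=> i t i' w tM c d r s; rewrite !scal_via_comp trM tM. Qed.

Lemma upward_via_unit j : upward (@via_unit j).
Proof.
move=> i t i' w [tau t1]; exists (fc_comp w tau) => x.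
by rewrite scal_via_comp t1 tr_comp.
Qed.

Lemma upward_admissible j : upward (@admissible j).
Proof.
move=> i t i' w [tD tDl tM t1]; split;
  [exact: upward_via_addr | exact: upward_via_addl
  | exact: upward_via_mul | exact: upward_via_unit].
Qed.

(* The pairings in [isAction] go through chosen cones over [src j]; a
   coequaliser of the two legs turns them into a single level. *)
Lemma eventually_via_addr j : eventually (@via_addr j).
Proof.
case: act_action => _ [_ [actDr _]].
case: (actDr j) => k [u [u' E]].
pose q := projT2 (cone_pt (src j) (src j)).
case: (tr_coeq u (fc_comp u' q.1)) => k1 [z1 Hz1].
case: (tr_coeq (fc_comp z1 u) (fc_comp z1 (fc_comp u' q.2))) => k2 [z2 Hz2].
exists k2, (fc_comp z2 (fc_comp z1 u)) => c r s.
have := E (c, (tr z1 (tr z2 r), tr z1 (tr z2 s))).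
rewrite /= -!/(tr _ _) -trD => E'.
rewrite /scal_via !tr_comp (trD z2) (trD z1) /scal E'.
congr (_ + _); congr (pm_fun act j (c, _)).
- by rewrite Hz1 tr_comp.
- by move: (Hz2 s); rewrite !tr_comp.
Qed.

Lemma eventually_via_addl j : eventually (@via_addl j).
Proof.
case: act_action => _ [actDl _].
case: (actDl j) => k [u [u' E]].
pose q := projT2 (cone_pt (src j) (src j)).
case: (tr_coeq u (fc_comp u' q.1)) => k1 [z1 Hz1].
case: (tr_coeq (fc_comp z1 u) (fc_comp z1 (fc_comp u' q.2))) => k2 [z2 Hz2].
exists k2, (fc_comp z2 (fc_comp z1 u)) => c d r.
have := E (c, (d, tr z1 (tr z2 r))).
rewrite /= -!/(tr _ _) => E'.
rewrite /scal_via !tr_comp /scal E'.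
congr (_ + _); congr (pm_fun act j (_, _)).
- by rewrite Hz1 tr_comp.
- by move: (Hz2 r); rewrite !tr_comp.
Qed.

Lemma eventually_via_unit j : eventually (@via_unit j).
Proof.
case: act_action => _ [_ [_ [_ [act1 _]]]].
case: (act1 j) => k [u [u' E]].
by exists k, u, u' => x; have := E x.
Qed.

Lemma scal_mull_rep j : exists b (s : hom (src j) b) (tau : hom j b), forall c a e,
  scal j c (tr s (rmul a e)) = rmul (scal j c (tr s a)) (tr tau e).
Proof.
case: act_action => _ [_ [_ [_ [_ [actMl _]]]]].
case: (actMl j) => k [u [u' E]].
pose q := projT2 (cone_pt (src j) j).
case: (tr_coeq u (fc_comp u' q.1)) => k1 [z1 Hz1].
exists k1, (fc_comp z1 u), (fc_comp z1 (fc_comp u' q.2)) => c a e.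
have := E (c, (tr z1 a, tr z1 e)).
rewrite /= -!/(tr _ _) -trM => E'.
rewrite !tr_comp trM /scal E'.
by congr (rmul (pm_fun act j (_, _)) _); rewrite Hz1 tr_comp.
Qed.

Lemma scal_mulr_rep j : exists b (s : hom (src j) b) (tau : hom j b), forall c a e,
  scal j c (tr s (rmul a e)) = rmul (tr tau a) (scal j c (tr s e)).
Proof.
case: act_action => _ [_ [_ [_ [_ [_ actMr]]]]].
case: (actMr j) => k [u [u' E]].
pose q := projT2 (cone_pt j (src j)).
case: (tr_coeq u (fc_comp u' q.2)) => k1 [z1 Hz1].
exists k1, (fc_comp z1 u), (fc_comp z1 (fc_comp u' q.1)) => c a e.
have := E (c, (tr z1 a, tr z1 e)).
rewrite /= -!/(tr _ _) -trM => E'.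
rewrite !tr_comp trM /scal E'.
by congr (rmul _ (pm_fun act j (_, _))); rewrite Hz1 tr_comp.
Qed.

Lemma scal_assoc_rep j : exists b (s : hom (src j) b) (s' : hom (src (src j)) b),
  forall c d a, scal j (c * d) (tr s a) = scal j c (scal (src j) d (tr s' a)).
Proof.
case: act_action => _ [_ [_ [actA _]]].
case: (actA j) => k [u [u' E]].
by exists k, u, u' => c d a; have := E (c, (d, a)).
Qed.

Lemma scal_compat_rep j j' (v : hom j j') :
  exists b (u : hom (src j') b) (u' : hom (src j) b),
  forall c x, tr v (scal j' c (tr u x)) = scal j c (tr u' x).
Proof.
case: act_action => act_mor _.
case: (act_mor j j' v) => k [u [u' E]].
by exists k, u, u' => c x; have := E (c, x).
Qed.

(* (c r)(d s) = c (r (d s)) = c (d (r s)) = (c d)(r s), by the [mull], [mulr]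
   and [assoc] representatives, [mulr] being used one level down, at [b1];
   [compat] carries the inner scalar between the levels. *)
Lemma eventually_via_mul j : eventually (@via_mul j).
Proof.
case: (scal_mull_rep j) => b1 [s1 [t1 M1]].
case: (scal_compat_rep t1) => b2 [u2 [u2' C2]].
case: (scal_mulr_rep b1) => b3 [s3 [t3 M3]].
case: (scal_compat_rep s1) => b4 [u4 [u4' C4]].
case: (scal_assoc_rep j) => b5 [s5 [s5' A5]].
case: (tr_span (fc_comp t3 s1) u2') => d1 [g3 [g2 HA]].
case: (tr_coeq (fc_comp g2 u2) (fc_comp g3 s3)) => d2 [z1 HB].
case: (tr_span (fc_comp z1 (fc_comp g3 s3)) u4) => d3 [h [g4 HC]].
case: (tr_span (fc_comp g4 u4') s5') => d4 [h2 [g5 HD]].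
pose t0 := fc_comp h2 (fc_comp h (fc_comp z1 (fc_comp g3 (fc_comp t3 s1)))).
case: (tr_coeq t0 (fc_comp g5 s5)) => i [z2 HE].
exists i, (fc_comp z2 t0) => c d r s; rewrite /scal_via /t0 !tr_comp.
move: HA HB HC HD HE; rewrite /= => HA HB HC HD HE.
set Y := tr z1 (tr h (tr h2 (tr z2 s))).
set rs := tr z2 (rmul r s).
have ds_b1 : tr s1 (tr t3 (tr g3 Y)) = tr u2' (tr g2 Y) by rewrite -HA tr_comp.
have ds_src : tr u2 (tr g2 Y) = tr s3 (tr g3 Y).
  by move: (HB (tr h (tr h2 (tr z2 s)))); rewrite !tr_comp.
rewrite ds_b1 -C2 ds_src -M1 -M3.
have rs_b1 : rmul (tr g3 (tr z1 (tr h (tr h2 (tr z2 r))))) (tr g3 Y) =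
             tr g3 (tr z1 (tr h (tr h2 rs))) by rewrite /rs !trM.
have rs_b4 : tr s3 (tr g3 (tr z1 (tr h (tr h2 rs)))) = tr u4 (tr g4 (tr h2 rs)).
  by move: (HC (tr h2 rs)); rewrite !tr_comp.
have rs_b5 : tr u4' (tr g4 (tr h2 rs)) = tr s5' (tr g5 rs).
  by move: (HD rs); rewrite !tr_comp.
rewrite rs_b1 rs_b4 C4 rs_b5 -A5.
by move: (HE (rmul r s)); rewrite !tr_comp => ->.
Qed.

Lemma eventually_admissible j : eventually (@admissible j).
Proof.
have upD : upward (fun i (t : hom (src j) i) => via_addr t /\ via_addl t).
  by move=> i t i' w [? ?]; split; [exact: upward_via_addr | exact: upward_via_addl].
have upM1 : upward (fun i (t : hom (src j) i) => via_mul t /\ via_unit t).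
  by move=> i t i' w [? ?]; split; [exact: upward_via_mul | exact: upward_via_unit].
have evD := eventually_and (@upward_via_addr j) (@upward_via_addl j)
  (eventually_via_addr j) (eventually_via_addl j).
have evM1 := eventually_and (@upward_via_mul j) (@upward_via_unit j)
  (eventually_via_mul j) (eventually_via_unit j).
case: (eventually_and upD upM1 evD evM1) => i [t [[tD tDl] [tM t1]]].
by exists i, t.
Qed.

Lemma scal_via_assoc j i (t : hom (src j) i) :
  exists b (s : hom (src i) b) (rho : hom i b),
  forall k c r, scal_via t k (scal i c (tr s r)) = scal_via t (k * c) (tr rho r).
Proof.
case: (scal_compat_rep t) => b1 [u1 [u1' C1]].
case: (scal_assoc_rep j) => b5 [s5 [s5' A5]].
case: (tr_span u1' s5') => d [g1 [g5 H1]].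
case: (tr_span t (fc_comp g5 s5)) => d' [rho [z H2]].
exists d', (fc_comp z (fc_comp g1 u1)), rho => k c r.
rewrite /scal_via !tr_comp C1 H1 -A5.
by move: (H2 r); rewrite tr_comp => ->.
Qed.

Lemma admissible_lift j i (t : hom (src j) i) j' (z : hom j j') :
  exists i' (t' : hom (src j') i'), admissible t' /\
  exists w : hom i i', forall c r, tr z (scal_via t' c r) = scal_via t c (tr w r).
Proof.
case: (eventually_admissible j') => i0 [t0 t0_adm].
case: (scal_compat_rep z) => b [u [u' C]].
case: (tr_span t0 u) => d [g1 [g2 H1]].
case: (tr_span t (fc_comp g2 u')) => d' [w [h H2]].
exists d', (fc_comp h (fc_comp g1 t0)); split.
  by do 2 apply: upward_admissible.
exists w => c r.
rewrite /scal_via !tr_comp H1 C.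
by move: (H2 r); rewrite tr_comp => ->.
Qed.

Record stage := Stage {
  st_base : I;
  st_top : I;
  st_cut : hom (src st_base) st_top;
  st_adm : admissible st_cut }.

(* Elements of the algebra at a stage are the functions [k |-> k x] with [x] a
   formal sum of scalar multiples, rather than the elements [x] themselves:
   scaling [(c g)(k) = g (k c)] is then well defined. *)
Definition is_kfun (p : stage) (g : K -> prR R (st_base p)) :=
  exists l : seq (K * prR R (st_top p)),
    g = fun k => \sum_(x <- l) scal_via (st_cut p) (k * x.1) x.2.
Arguments is_kfun : clear implicits.
Definition kfun (p : stage) := {g : K -> prR R (st_base p) | is_kfun p g}.

Lemma scal_via_sum j i (t : hom (src j) i) c T (s : seq T) F : via_addr t ->
  scal_via t c (\sum_(x <- s) F x) = \sum_(x <- s) scal_via t c (F x).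
Proof.
by move=> tD; exact: (@additive_sum (prR R i) (prR R j) T (scal_via t c) s F (tD c)).
Qed.

Lemma scal_viaN j i (t : hom (src j) i) c r : via_addr t ->
  scal_via t c (- r) = - scal_via t c r.
Proof.
move=> tD; apply: (addrI (scal_via t c r)); rewrite -tD !subrr.
exact: (additive0 (tD c)).
Qed.

Section KfunAlgebra.
Variable p : stage.

HB.instance Definition _ := gen_eqMixin (kfun p).
HB.instance Definition _ := gen_choiceMixin (kfun p).

Lemma kfunE (g h : kfun p) : proj1_sig g =1 proj1_sig h -> g = h.
Proof. by case: g h => [g gP] [h hP] /= /funext gh; exact: eq_exist. Qed.

Let cutD : via_addr (st_cut p). Proof. by case: (st_adm p). Qed.
Let cutDl : via_addl (st_cut p). Proof. by case: (st_adm p). Qed.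
Let cutM : via_mul (st_cut p). Proof. by case: (st_adm p). Qed.

Lemma is_kfun0 : is_kfun p (fun _ => 0).
Proof. by exists [::]; apply: funext => k; rewrite big_nil. Qed.

Lemma is_kfunD g h : is_kfun p g -> is_kfun p h -> is_kfun p (fun k => g k + h k).
Proof. by move=> [l1 ->] [l2 ->]; exists (l1 ++ l2); apply: funext => k; rewrite big_cat. Qed.

Lemma is_kfunN g : is_kfun p g -> is_kfun p (fun k => - g k).
Proof.
move=> [l ->]; exists [seq (x.1, - x.2) | x <- l]; apply: funext => k.
by rewrite big_map -sumrN; apply: eq_bigr => x _; rewrite scal_viaN.
Qed.

Lemma is_kfunZ c g : is_kfun p g -> is_kfun p (fun k => g (k * c)).
Proof.
move=> [l ->]; exists [seq (c * x.1, x.2) | x <- l]; apply: funext => k.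
by rewrite big_map; apply: eq_bigr => x _ /=; rewrite mulrA.
Qed.

Lemma kfun_mul_scalar g h : is_kfun p g -> is_kfun p h ->
  exists F : K -> prR R (st_base p), forall a b, rmul (g a) (h b) = F (a * b).
Proof.
move=> [l1 ->] [l2 ->].
exists (fun m => \sum_(x <- l1) \sum_(y <- l2)
                   scal_via (st_cut p) (m * (x.1 * y.1)) (rmul x.2 y.2)) => a b.
rewrite rmul_suml; apply: eq_bigr => x _; rewrite rmul_sumr; apply: eq_bigr => y _.
by rewrite cutM; congr scal_via; rewrite mulrACA.
Qed.

Lemma is_kfunM g h : is_kfun p g -> is_kfun p h -> is_kfun p (fun k => rmul (g k) (h 1)).
Proof.
move=> [l1 ->] [l2 ->].
exists [seq (x.1 * y.1, rmul x.2 y.2) | x <- l1, y <- l2]; apply: funext => k.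
rewrite big_allpairs_dep rmul_suml; apply: eq_bigr => x _; rewrite rmul_sumr.
by apply: eq_bigr => y _; rewrite cutM /= mul1r mulrA.
Qed.

Lemma is_kfun_additive g a b : is_kfun p g -> g (a + b) = g a + g b.
Proof. by move=> [l ->]; rewrite -big_split; apply: eq_bigr => x _; rewrite mulrDl cutDl. Qed.

Definition kfun0 : kfun p := exist _ _ is_kfun0.
Definition kfun_add (g h : kfun p) : kfun p := exist _ _ (is_kfunD (proj2_sig g) (proj2_sig h)).
Definition kfun_opp (g : kfun p) : kfun p := exist _ _ (is_kfunN (proj2_sig g)).
Definition kfun_mul (g h : kfun p) : kfun p := exist _ _ (is_kfunM (proj2_sig g) (proj2_sig h)).
Definition kfun_scale (c : K) (g : kfun p) : kfun p := exist _ _ (is_kfunZ c (proj2_sig g)).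

Lemma kfun_addA : associative kfun_add.
Proof. by move=> g h f; apply: kfunE => k /=; rewrite addrA. Qed.
Lemma kfun_addC : commutative kfun_add.
Proof. by move=> g h; apply: kfunE => k /=; rewrite addrC. Qed.
Lemma kfun_add0 : left_id kfun0 kfun_add.
Proof. by move=> g; apply: kfunE => k /=; rewrite add0r. Qed.
Lemma kfun_addN : left_inverse kfun0 kfun_opp kfun_add.
Proof. by move=> g; apply: kfunE => k /=; rewrite addNr. Qed.

HB.instance Definition _ :=
  GRing.isZmodule.Build (kfun p) kfun_addA kfun_addC kfun_add0 kfun_addN.

Lemma kfun_mulA : associative kfun_mul.
Proof. by move=> g h f; apply: kfunE => k /=; rewrite rmulA. Qed.
Lemma kfun_mulDl : left_distributive kfun_mul +%R.
Proof. by move=> g h f; apply: kfunE => k /=; rewrite rmulDl. Qed.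
Lemma kfun_mulDr : right_distributive kfun_mul +%R.
Proof. by move=> g h f; apply: kfunE => k /=; rewrite rmulDr. Qed.

Definition kfun_rng : rng := @Rng (kfun p) kfun_mul kfun_mulA kfun_mulDl kfun_mulDr.
Definition kfun_scaleR (c : K) (g : kfun_rng) : kfun_rng := kfun_scale c g.

Lemma kfun_scaleDl c c' (g : kfun_rng) :
  kfun_scaleR (c + c') g = kfun_scaleR c g + kfun_scaleR c' g.
Proof. by apply: kfunE => k /=; rewrite mulrDr; exact: is_kfun_additive (proj2_sig g). Qed.
Lemma kfun_scaleDr c (g h : kfun_rng) :
  kfun_scaleR c (g + h) = kfun_scaleR c g + kfun_scaleR c h.
Proof. exact: kfunE. Qed.
Lemma kfun_scaleA c c' (g : kfun_rng) : kfun_scaleR (c * c') g = kfun_scaleR c (kfun_scaleR c' g).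
Proof. by apply: kfunE => k /=; rewrite mulrA. Qed.
Lemma kfun_scale1 (g : kfun_rng) : kfun_scaleR 1 g = g.
Proof. by apply: kfunE => k /=; rewrite mulr1. Qed.
Lemma kfun_scale_mull c (g h : kfun_rng) :
  kfun_scaleR c (rmul g h) = rmul (kfun_scaleR c g) h.
Proof. exact: kfunE. Qed.
Lemma kfun_scale_mulr c (g h : kfun_rng) :
  kfun_scaleR c (rmul g h) = rmul g (kfun_scaleR c h).
Proof.
apply: kfunE => k /=.
by case: (kfun_mul_scalar (proj2_sig g) (proj2_sig h)) => F gh; rewrite !gh mul1r mulr1.
Qed.

Definition kfun_alg : kalg K := @KAlg K kfun_rng kfun_scaleR kfun_scaleDl kfun_scaleDr
  kfun_scaleA kfun_scale1 kfun_scale_mull kfun_scale_mulr.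
End KfunAlgebra.

Definition stage_hom_cond (p p' : stage)
    (vw : hom (st_base p) (st_base p') * hom (st_top p) (st_top p')) :=
  forall c r, tr vw.1 (scal_via (st_cut p') c r) = scal_via (st_cut p) c (tr vw.2 r).
Arguments stage_hom_cond : clear implicits.
Definition stage_hom (p p' : stage) := {vw | stage_hom_cond p p' vw}.

Lemma stage_homE p p' (m m' : stage_hom p p') : proj1_sig m = proj1_sig m' -> m = m'.
Proof. by case: m m' => [a Ha] [b Hb] /= ab; exact: eq_exist. Qed.

Lemma stage_id_cond p : stage_hom_cond p p (fc_id _, fc_id _).
Proof. by move=> c r; rewrite /= !tr_id. Qed.
Definition stage_id p : stage_hom p p := exist _ _ (@stage_id_cond p).

Lemma stage_comp_cond p1 p2 p3 (g : stage_hom p2 p3) (f : stage_hom p1 p2) :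
  stage_hom_cond p1 p3 (fc_comp (proj1_sig g).1 (proj1_sig f).1,
                        fc_comp (proj1_sig g).2 (proj1_sig f).2).
Proof.
case: g f => [[g1 g2] Hg] [[f1 f2] Hf] c r /=.
by rewrite !tr_comp (Hg c r) (Hf c).
Qed.
Definition stage_comp p1 p2 p3 (g : stage_hom p2 p3) (f : stage_hom p1 p2) : stage_hom p1 p3 :=
  exist _ _ (stage_comp_cond g f).

Lemma stage_compA p1 p2 p3 p4 (f : stage_hom p1 p2) (g : stage_hom p2 p3) (h : stage_hom p3 p4) :
  stage_comp h (stage_comp g f) = stage_comp (stage_comp h g) f.
Proof. by apply: stage_homE => /=; rewrite !fc_compA. Qed.
Lemma stage_id_l p1 p2 (f : stage_hom p1 p2) : stage_comp (stage_id p2) f = f.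
Proof. by apply: stage_homE => /=; rewrite !fc_id_l; case: (proj1_sig f). Qed.
Lemma stage_id_r p1 p2 (f : stage_hom p1 p2) : stage_comp f (stage_id p1) = f.
Proof. by apply: stage_homE => /=; rewrite !fc_id_r; case: (proj1_sig f). Qed.

Definition deepen (p : stage) i' (w : hom (st_top p) i') : stage :=
  Stage (@upward_admissible (st_base p) (st_top p) (st_cut p) i' w (st_adm p)).

Lemma deepen_cond (p : stage) i' (w : hom (st_top p) i') :
  stage_hom_cond p (deepen w) (fc_id _, w).
Proof. by move=> c r; rewrite /= tr_id scal_via_comp. Qed.
Definition deepen_hom (p : stage) i' (w : hom (st_top p) i') : stage_hom p (deepen w) :=
  exist _ _ (@deepen_cond p i' w).

Lemma stage_lift (p : stage) j' (z : hom (st_base p) j') :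
  exists i' (t' : hom (src j') i') (t'_adm : admissible t') (n : stage_hom p (Stage t'_adm)),
    (proj1_sig n).1 = z.
Proof.
case: (admissible_lift (st_cut p) z) => i' [t' [t'_adm [w Hw]]].
have n_cond : stage_hom_cond p (Stage t'_adm) (z, w) by move=> c r; exact: Hw.
by exists i', t', t'_adm, (exist _ _ n_cond).
Qed.

Lemma stage_nonempty : inhabited stage.
Proof.
case: (fc_nonempty I) => j; case: (eventually_admissible j) => i [t t_adm].
exact: inhabits (Stage t_adm).
Qed.

Lemma stage_cone (p p' : stage) : inhabited {q : stage & (stage_hom p q * stage_hom p' q)%type}.
Proof.
case: (fc_cone (st_base p) (st_base p')) => [[j3 [z1 z2]]].
case: (stage_lift z1) => i1 [t1 [t1_adm [n1 _]]].
case: (stage_lift z2) => i2 [t2 [t2_adm [n2 _]]].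
case: (fc_span t1 t2) => d [g1 [g2 g12]].
pose q := deepen (p := Stage t1_adm) g1.
have m2 : stage_hom_cond (Stage t2_adm) q (fc_id _, g2).
  by move=> c r; rewrite /= tr_id /q /deepen /= g12 scal_via_comp.
constructor; exists q; split.
  exact: stage_comp (deepen_hom (p := Stage t1_adm) g1) n1.
exact: stage_comp (exist (stage_hom_cond (Stage t2_adm) q) _ m2) n2.
Qed.

Lemma stage_coeq (p p' : stage) (u v : stage_hom p p') :
  exists q (w : stage_hom p' q), stage_comp w u = stage_comp w v.
Proof.
case: (fc_coeq (proj1_sig u).1 (proj1_sig v).1) => j'' [z zuv].
case: (stage_lift z) => i'' [t'' [t''_adm [n nz]]].
case: (fc_coeq (fc_comp (proj1_sig n).2 (proj1_sig u).2)
               (fc_comp (proj1_sig n).2 (proj1_sig v).2)) => i3 [y yuv].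
exists (deepen (p := Stage t''_adm) y), (stage_comp (deepen_hom (p := Stage t''_adm) y) n).
apply: stage_homE => /=; congr pair; first by rewrite !fc_id_l nz.
by rewrite -!fc_compA yuv.
Qed.

Definition stage_cat : FiltCat :=
  @Build_FiltCat stage stage_hom stage_id stage_comp stage_compA stage_id_l stage_id_r
    stage_nonempty stage_cone stage_coeq.

Lemma is_kfun_tr (p p' : stage) (m : stage_hom p p') (g : K -> prR R (st_base p')) :
  is_kfun p' g -> is_kfun p (fun k => tr (proj1_sig m).1 (g k)).
Proof.
case: m => [[v w] m_cond] [l ->] /=; exists [seq (x.1, tr w x.2) | x <- l].
by apply: funext => k; rewrite tr_sum big_map; apply: eq_bigr => x _; rewrite m_cond.
Qed.

Definition kfun_tr (p p' : stage) (m : stage_hom p p') (g : kfun p') : kfun p :=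
  exist _ _ (is_kfun_tr m (proj2_sig g)).

Lemma kfun_tr_rhom (p p' : stage) (m : stage_hom p p') :
  rhomP (A := kfun_alg p') (B := kfun_alg p) (kfun_tr m).
Proof. by split=> g h; apply: kfunE => k /=; [exact: trD | exact: trM]. Qed.

Definition kfun_map (p p' : stage_cat) (m : fc_hom p p') : rhom (kfun_alg p') (kfun_alg p) :=
  RHom (kfun_tr_rhom m).

Lemma kfun_map_scale (p p' : stage_cat) (m : fc_hom p p') c g :
  kfun_map m (kscale c g) = kscale c (kfun_map m g).
Proof. exact: kfunE. Qed.
Lemma kfun_map_id (p : stage_cat) g : kfun_map (fc_id p) g = g.
Proof. by apply: kfunE => k /=; rewrite tr_id. Qed.
Lemma kfun_map_comp (p1 p2 p3 : stage_cat) (u : fc_hom p1 p2) (v : fc_hom p2 p3) g :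
  kfun_map (fc_comp v u) g = kfun_map u (kfun_map v g).
Proof. by apply: kfunE => k /=; rewrite tr_comp. Qed.

Definition stage_proKAlg : proKAlg K :=
  @ProKAlg K stage_cat kfun_alg kfun_map kfun_map_scale kfun_map_id kfun_map_comp.

Lemma is_kfun_orbit (p : stage) (r : prR R (st_top p)) :
  is_kfun p (fun k => scal_via (st_cut p) k r).
Proof. by exists [:: (1, r)]; apply: funext => k; rewrite big_seq1 mulr1. Qed.

Definition orbit (p : stage) (r : prR R (st_top p)) : kfun p := exist _ _ (is_kfun_orbit r).

Definition orbit_map : proMap (rsys R) (rsys (pa_rng stage_proKAlg)) :=
  ProMap (rsys R) (rsys (pa_rng stage_proKAlg)) (fun p : stage_cat => st_top p)
    (fun p r => @orbit p r).

Definition stage_at (j : I) : stage :=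
  Stage (proj2_sig (cid (proj2_sig (cid (eventually_admissible j))))).

Definition eval_one_map : proMap (rsys (pa_rng stage_proKAlg)) (rsys R) :=
  ProMap (rsys (pa_rng stage_proKAlg)) (rsys R) (fun j => (stage_at j : stage_cat))
    (fun j (g : kfun (stage_at j)) => proj1_sig g 1).

Lemma orbit_map_rng : isRngMor orbit_map.
Proof.
split.
  move=> p p' m; exists (st_top p'), (fc_id _), (proj1_sig m).2 => x.
  apply: kfunE => k /=; rewrite /smap /= prmap_id; exact: (proj2_sig m).
move=> p; case: (st_adm p) => cutD _ cutM _.
by split=> x y; apply: kfunE => k /=; [exact: cutD | rewrite [in RHS]cutM mulr1].
Qed.

Lemma eval_one_map_rng : isRngMor eval_one_map.
Proof.
split; last by move=> j; split.
move=> j j' v.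
case: (stage_cone (stage_at j') (stage_at j)) => [[q0 [a0 b0]]].
case: (fc_coeq (proj1_sig b0).1 (fc_comp (proj1_sig a0).1 v)) => j1 [z zab].
case: (stage_lift z) => i' [t' [t'_adm [n nz]]].
exists (Stage t'_adm : stage_cat), (stage_comp n a0), (stage_comp n b0) => g /=.
by rewrite /smap /= -/(tr _ _) -tr_comp nz -fc_compA -zab.
Qed.

Lemma eval_one_orbit : pro_eq (procomp eval_one_map orbit_map) (pid (rsys R)).
Proof.
move=> j; case: (st_adm (stage_at j)) => _ _ _ [tau cut1].
exists (st_top (stage_at j)), (fc_id _), tau => x /=.
by rewrite /smap /= prmap_id; exact: cut1.
Qed.

(* [k (1 g) = g k] for [g] in the algebra at [p], by [scal_via_assoc]; the
   cone and the span put [stage_at (st_top p)] and [p] over a common stage. *)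
Lemma orbit_eval_one :
  pro_eq (procomp orbit_map eval_one_map) (pid (rsys (pa_rng stage_proKAlg))).
Proof.
move=> p /=.
have [b0 [s [rho assoc]]] := scal_via_assoc (st_cut p).
pose q := stage_at (st_top p).
case: (stage_cone q p) => [[o0 [a0 b0']]].
case: (tr_span (fc_comp (proj1_sig a0).2 (st_cut q)) s) => d [g1 [g2 H1]].
case: (tr_coeq (fc_comp g1 (proj1_sig b0').2) (fc_comp g2 rho)) => d2 [z H2].
pose y := fc_comp z g1.
pose a := stage_comp (deepen_hom (p := o0) y) a0.
pose b := stage_comp (deepen_hom (p := o0) y) b0'.
exists (deepen (p := o0) y : stage_cat), a, b => g.
have a_cond := proj2_sig a; have b_cond := proj2_sig b.
apply: kfunE => k; case: (proj2_sig g) => l gl.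
rewrite /= gl; case: (st_adm p) => cutD _ _ _.
rewrite -!/(tr _ _) !tr_sum scal_via_sum //; apply: eq_bigr => x _.
rewrite a_cond b_cond /scal_via mul1r.
have a_top : tr (st_cut q) (tr (proj1_sig a).2 x.2) = tr s (tr g2 (tr z x.2)).
  by move: (H1 (tr z x.2)); rewrite /= !tr_comp.
have b_top : tr (proj1_sig b).2 x.2 = tr rho (tr g2 (tr z x.2)).
  by move: (H2 x.2); rewrite /= !tr_comp.
by rewrite a_top -/(scal_via _ _ _) assoc /scal_via b_top.
Qed.

Lemma orbit_map_act :
  pro_eq (procomp orbit_map act) (procomp (actA stage_proKAlg) (prodK K orbit_map)).
Proof.
move=> p; have [b0 [s [rho assoc]]] := scal_via_assoc (st_cut p).
by exists b0, s, rho => x; apply: kfunE => k /=; exact: assoc.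
Qed.
End ScalarAction.

Theorem mainTheorem9 (K : comPzRingType) (R : proRng)
  (act : proMap (Sys (fKR K R)) (rsys R)) :
  isAction act ->
  exists (A : proKAlg K)
         (phi : proMap (rsys R) (rsys (pa_rng A)))
         (psi : proMap (rsys (pa_rng A)) (rsys R)),
    [/\ isRngMor phi, isRngMor psi,
        pro_eq (procomp psi phi) (pid (rsys R)),
        pro_eq (procomp phi psi) (pid (rsys (pa_rng A))) &
        pro_eq (procomp phi act) (procomp (actA A) (prodK K phi))].
Proof.
move=> act_action.
exists (stage_proKAlg act_action), (orbit_map act_action), (eval_one_map act_action).
split.
- exact: orbit_map_rng.
- exact: eval_one_map_rng.
- exact: eval_one_orbit.
- exact: orbit_eval_one.
- exact: orbit_map_act.
Qed.
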